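(* Let $\mathbb{F}$ be an algebraically closed field of characteristic zero and $J_2=E_{12}+E_{23}$. Let $\underline{A}=(J_2,A_2,A_3)$ and $\underline{B}=(0,B_2,B_3)$ be elements of $\mathcal{N}_3^3$ such that $f(\underline{A})=f(\underline{B})$ for all $f\in S_{3,3}$. Then $f(\underline{A})=f(\underline{B})$ for all $f\in P_{3,3}$.
   Context: $E_{ij}$ is the $3\times3$ matrix unit. $\mathcal{N}_3^3$ is the set of triples of nilpotent $3\times3$ matrices over $\mathbb{F}$. $\mathrm{tr}(Y_{i_1}\cdots Y_{i_r})$ denotes the function $\underline{A}\mapsto\mathrm{tr}(A_{i_1}\cdots A_{i_r})$. $S_{3,3}$ is the set consisting of: $\mathrm{tr}(Y_iY_j),\ \mathrm{tr}(Y_i^2Y_j),\ \mathrm{tr}(Y_iY_j^2),\ \mathrm{tr}(Y_i^2Y_j^2),\ \mathrm{tr}(Y_i^2Y_j^2Y_iY_j)$ for $1\le i<j\le3$; $\mathrm{tr}(Y_1Y_2Y_3)$, $\mathrm{tr}(Y_1Y_3Y_2)$; $\mathrm{tr}(Y_i^2Y_jY_k)$ for $\{i,j,k\}=\{1,2,3\}$; $\mathrm{tr}(Y_1^2Y_2Y_1Y_3)$, $\mathrm{tr}(Y_2^2Y_1Y_2Y_3)$, $\mathrm{tr}(Y_3^2Y_1Y_3Y_2)$. $P_{3,3}=S_{3,3}\sqcup P'_{3,3}$, where $P'_{3,3}$ consists of $\mathrm{tr}(Y_i^2Y_j^2Y_k)$ and $\mathrm{tr}(Y_i^2Y_j^2Y_iY_k)$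 for $\{i,j,k\}=\{1,2,3\}$, and $\mathrm{tr}(Y_1^2Y_2^2Y_3^2)$. *)

From HB Require Import structures.
From mathcomp Require Import all_boot all_order all_algebra.
Set Implicit Arguments. Unset Strict Implicit. Unset Printing Implicit Defensive.
Import GRing.Theory.
Local Open Scope ring_scope.

Definition nilpotent_mx (F : fieldType) (n : nat) (A : 'M[F]_n) : Prop :=
  exists k : nat, A ^+ k = 0.

(* J_2 = E_12 + E_23 (indices shifted to 0-based ordinals). *)
Definition J2 (F : fieldType) : 'M[F]_3 :=
  delta_mx (0 : 'I_3) (1 : 'I_3) + delta_mx (1 : 'I_3) (2 : 'I_3).

(* Y_i evaluated at a triple (A1,A2,A3); indices 1,2,3 as in the paper. *)
Definition selY (F : fieldType) (A1 A2 A3 : 'M[F]_3) (i : nat) : 'M[F]_3 :=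
  match i with 1 => A1 | 2 => A2 | _ => A3 end.

(* tr(Y_{i_1} ... Y_{i_r}) evaluated at (A1,A2,A3). *)
Definition trw (F : fieldType) (A1 A2 A3 : 'M[F]_3) (w : seq nat) : F :=
  \tr (foldr (fun i M => selY A1 A2 A3 i *m M) 1%:M w).

Definition pairs_lt : seq (nat * nat) := [:: (1, 2); (1, 3); (2, 3)]%N.
Definition perms3 : seq (nat * nat * nat) :=
  [:: (1, 2, 3); (1, 3, 2); (2, 1, 3); (2, 3, 1); (3, 1, 2); (3, 2, 1)]%N.

Definition S33 : seq (seq nat) :=
  (flatten [seq [:: [:: ij.1; ij.2]; [:: ij.1; ij.1; ij.2]; [:: ij.1; ij.2; ij.2];
                   [:: ij.1; ij.1; ij.2; ij.2];
                   [:: ij.1; ij.1; ij.2; ij.2; ij.1; ij.2]] | ij <- pairs_lt])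
  ++ [:: [:: 1; 2; 3]; [:: 1; 3; 2]]%N
  ++ [seq [:: t.1.1; t.1.1; t.1.2; t.2] | t <- perms3]
  ++ [:: [:: 1; 1; 2; 1; 3]; [:: 2; 2; 1; 2; 3]; [:: 3; 3; 1; 3; 2]]%N.

Definition P'33 : seq (seq nat) :=
  [seq [:: t.1.1; t.1.1; t.1.2; t.1.2; t.2] | t <- perms3]
  ++ [seq [:: t.1.1; t.1.1; t.1.2; t.1.2; t.1.1; t.2] | t <- perms3]
  ++ [:: [:: 1; 1; 2; 2; 3; 3]]%N.

Definition P33 : seq (seq nat) := S33 ++ P'33.

(* Since B_1 = 0, the words tr(Y_1 Y_i), tr(Y_1^2 Y_i), tr(Y_1^2 Y_i^2) of S_{3,3} give
   tr(J_2 A_i) = tr(J_2^2 A_i) = tr(J_2^2 A_i^2) = 0 for i = 2, 3.  For a 3x3 matrix X these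
   traces are X_21 + X_32, X_31 and X_31 (X_11 + X_33) + X_32 X_21 = -X_32^2, so X is upper
   triangular, and a nilpotent upper triangular matrix is strictly upper triangular.  Hence
   every product of at least three of J_2, A_2, A_3 vanishes.  Every word of P'_{3,3} has length
   at least 3 and contains the letter 1, so both sides of each new identity are 0. *)
From HB Require Import structures.
From mathcomp Require Import all_boot all_order all_algebra.
Set Implicit Arguments. Unset Strict Implicit. Unset Printing Implicit Defensive.
Import GRing.Theory.
Local Open Scope ring_scope.

Definition upper_band (R : pzRingType) (n k : nat) (M : 'M[R]_n) : Prop :=
  forall i j : 'I_n, (j < i + k)%N -> M i j = 0.

Section UpperBand.

Variables (R : pzRingType) (n : nat).
Implicit Types (M N : 'M[R]_n) (k l : nat).

Lemma upper_band_mul k l M N :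
  upper_band k M -> upper_band l N -> upper_band (k + l) (M *m N).
Proof.
move=> bandM bandN i j ltji; rewrite mxE big1 // => m _.
have [ltmi|leim] := ltnP m (i + k); first by rewrite bandM ?mul0r.
by rewrite bandN ?mulr0 // (leq_trans ltji) // addnA leq_add2r.
Qed.

Lemma upper_band0_1 : upper_band 0 (1%:M : 'M[R]_n).
Proof. by move=> i j; rewrite addn0 mxE -val_eqE => /gtn_eqF ->. Qed.

Lemma upper_band_eq0 k M : (n <= k)%N -> upper_band k M -> M = 0.
Proof.
move=> lenk bandM; apply/matrixP => i j; rewrite mxE bandM //.
by rewrite (leq_trans (ltn_ord j)) // (leq_trans lenk) // leq_addl.
Qed.

Lemma upper_band_foldr (Y : nat -> 'M[R]_n) (w : seq nat) :
  (forall i, upper_band 1 (Y i)) ->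
  upper_band (size w) (foldr (fun i M => Y i *m M) 1%:M w).
Proof.
move=> bandY; elim: w => [|a w IHw] /=; first exact: upper_band0_1.
by rewrite -add1n; apply: upper_band_mul.
Qed.

Lemma upper_band0_mul_diag M N i :
  upper_band 0 M -> upper_band 0 N -> (M *m N) i i = M i i * N i i.
Proof.
move=> bandM bandN; rewrite mxE (bigD1 i) //= big1 ?addr0 // => m neqmi.
have [ltmi|leim] := ltnP m i; first by rewrite bandM ?mul0r ?addn0.
by rewrite bandN ?mulr0 // addn0 ltn_neqAle leim andbT eq_sym.
Qed.

Lemma upper_band0_exp M k : upper_band 0 M -> upper_band 0 (M ^+ k).
Proof.
move=> bandM; elim: k => [|k IHk]; first exact: upper_band0_1.
by rewrite exprS -mulmxE; apply: (upper_band_mul bandM IHk).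
Qed.

Lemma upper_band0_exp_diag M k i : upper_band 0 M -> (M ^+ k) i i = M i i ^+ k.
Proof.
move=> bandM; elim: k => [|k IHk]; first by rewrite !expr0 mxE eqxx.
by rewrite exprS -mulmxE upper_band0_mul_diag ?IHk ?exprS //; apply: upper_band0_exp.
Qed.

End UpperBand.

Lemma nilpotent_upper_band1 (F : fieldType) (n : nat) (M : 'M[F]_n) :
  nilpotent_mx M -> upper_band 0 M -> upper_band 1 M.
Proof.
move=> [k Mk0] bandM i j; rewrite addn1 ltnS leq_eqVlt => /orP[/eqP eqji|ltji].
  have -> : j = i by apply: val_inj.
  have := upper_band0_exp_diag k i bandM; rewrite Mk0 mxE => /esym/eqP.
  by rewrite expf_eq0 => /andP[_ /eqP].
by apply: bandM; rewrite addn0.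
Qed.

Section Matrices3.

Variable F : fieldType.
Implicit Types X : 'M[F]_3.

Fact ord3E :
  (ord0 = 0 :> 'I_3) * (lift ord0 ord0 = 1 :> 'I_3) * (lift ord0 (lift ord0 ord0) = 2 :> 'I_3).
Proof. by do !split; apply: val_inj. Qed.

Lemma mxtrace_J2_mul X : \tr (J2 F *m X) = X 1 0 + X 2 1.
Proof.
by rewrite /mxtrace !(mxE, big_ord_recl, big_ord0) /= !ord3E !(addr0, add0r, mul0r, mul1r).
Qed.

Lemma mxtrace_J2_J2_mul X : \tr (J2 F *m (J2 F *m X)) = X 2 0.
Proof.
by rewrite /mxtrace !(mxE, big_ord_recl, big_ord0) /= !ord3E !(addr0, add0r, mul0r, mul1r, mulr0).
Qed.

Lemma mx3_sqr20 X : (X *m X) 2 0 = X 2 0 * X 0 0 + X 2 1 * X 1 0 + X 2 2 * X 2 0.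
Proof. by rewrite !(mxE, big_ord_recl, big_ord0) /= !ord3E addr0 addrA. Qed.

Lemma upper_band0_mx3 X : X 1 0 = 0 -> X 2 0 = 0 -> X 2 1 = 0 -> upper_band 0 X.
Proof.
move=> X10 X20 X21 [[|[|[|?]]] ?] [[|[|[|?]]] ?] //= _.
- by rewrite -X10; congr (X _ _); apply: val_inj.
- by rewrite -X20; congr (X _ _); apply: val_inj.
- by rewrite -X21; congr (X _ _); apply: val_inj.
Qed.

Lemma upper_band1_J2 : upper_band 1 (J2 F).
Proof. by move=> [[|[|[|?]]] ?] [[|[|[|?]]] ?] //= _; rewrite !mxE -!val_eqE /= ?addr0. Qed.

Lemma J2_traces_upper_band1 X :
  nilpotent_mx X -> \tr (J2 F *m X) = 0 -> \tr (J2 F *m (J2 F *m X)) = 0 ->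
  \tr (J2 F *m (J2 F *m (X *m X))) = 0 -> upper_band 1 X.
Proof.
rewrite mxtrace_J2_mul !mxtrace_J2_J2_mul mx3_sqr20 => nilX /eqP trX X20.
have X10 : X 1 0 = - X 2 1 by apply/eqP; rewrite -addr_eq0.
rewrite X20 X10 mul0r mulr0 add0r addr0 mulrN => /eqP; rewrite oppr_eq0 mulf_eq0 orbb.
move=> /eqP X21; rewrite X21 oppr0 in X10.
exact/nilpotent_upper_band1/upper_band0_mx3.
Qed.

End Matrices3.

Section Words.

Variable F : fieldType.

Lemma trw0_mem1 (A2 A3 : 'M[F]_3) (w : seq nat) : (1 \in w)%N -> trw 0 A2 A3 w = 0.
Proof.
rewrite /trw => w1.
suff -> : foldr (fun i (M : 'M_3) => selY 0 A2 A3 i *m M) 1%:M w = 0 by apply: mxtrace0.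
elim: w w1 => [|a w IHw] //=; rewrite inE => /predU1P[<-|/IHw->].
  exact: mul0mx.
exact: mulmx0.
Qed.

Lemma trw_upper_band1 (A1 A2 A3 : 'M[F]_3) (w : seq nat) :
  upper_band 1 A1 -> upper_band 1 A2 -> upper_band 1 A3 -> (3 <= size w)%N ->
  trw A1 A2 A3 w = 0.
Proof.
move=> band1 band2 band3 longw.
have bandY i : upper_band 1 (selY A1 A2 A3 i) by case: i => [|[|[|i]]].
by rewrite /trw (upper_band_eq0 longw (upper_band_foldr (w := w) bandY)) mxtrace0.
Qed.

Lemma J2_word_traces_upper_band1 (A2 A3 : 'M[F]_3) (i : nat) :
  nilpotent_mx (selY (J2 F) A2 A3 i) ->
  trw (J2 F) A2 A3 [:: 1; i]%N = 0 -> trw (J2 F) A2 A3 [:: 1; 1; i]%N = 0 ->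
  trw (J2 F) A2 A3 [:: 1; 1; i; i]%N = 0 -> upper_band 1 (selY (J2 F) A2 A3 i).
Proof. by rewrite /trw /= !mulmx1; apply: J2_traces_upper_band1. Qed.

End Words.

Theorem lemma8p2 (F : closedFieldType) (hchar : [pchar F] =i pred0)
  (A2 A3 B2 B3 : 'M[F]_3) :
  nilpotent_mx (J2 F) -> nilpotent_mx A2 -> nilpotent_mx A3 ->
  nilpotent_mx (0 : 'M[F]_3) -> nilpotent_mx B2 -> nilpotent_mx B3 ->
  (forall w, w \in S33 -> trw (J2 F) A2 A3 w = trw 0 B2 B3 w) ->
  forall w, w \in P33 -> trw (J2 F) A2 A3 w = trw 0 B2 B3 w.
Proof.
move=> _ nilA2 nilA3 _ _ _ eqS w; rewrite mem_cat => /orP[/eqS // | wP'].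
have trA0 v : v \in S33 -> (1 \in v)%N -> trw (J2 F) A2 A3 v = 0.
  by move=> /eqS -> /trw0_mem1.
have bandA2 : upper_band 1 A2.
  by apply: (J2_word_traces_upper_band1 (i := 2)) nilA2 _ _ _; apply: trA0.
have bandA3 : upper_band 1 A3.
  by apply: (J2_word_traces_upper_band1 (i := 3)) nilA3 _ _ _; apply: trA0.
have /andP[longw w1] : (3 <= size w)%N && (1 \in w)%N by move: w wP'; apply/allP.
by rewrite trw0_mem1 // trw_upper_band1 //; apply: upper_band1_J2.
Qed.
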